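(* Let $p$ be a number of predicate symbols and let $M$ be a set of $m$ metarules, each in the fragment $\mathcal{M}^i_j$ and each containing, in addition to the (at most $j+1$) existentially quantified higher-order variables occurring in predicate positions of its literals, at most $k$ additional existentially quantified higher-order variables (occurring as arguments of literals). Then the number of (abstracted) programs expressible with $n$ clauses, where each clause is obtained from some metarule in $M$ by substituting each existentially quantified higher-order variable with one of the $p$ predicate symbols, is at most $(m\,p^{j+1+k})^n$.
   Context: A metarule is a higher-order formula of the form $\exists \pi \forall \mu\; l_0 \leftarrow l_1,\dots,l_r$, where each $l_t$ is a literal, $\pi$ and $\mu$ are disjoint sets of variables, each variable being first-order (can be bound to a constant symbol) or higher-order (can be bound to a predicate symbol). An example is $P(A,B) \leftarrow Q(A,B,R)$ with $P,Q,R$ existentially quantified higher-order variables and $A,B$ universally quantified first-order variables; here $R$ is an existentially quantified higher-order variable occurring as an argument. A metarule is in the fragment $\mathcal{M}^i_j$ if it has at most $j$ literals in the body and each literal has arity at most $i$. A clause is obtained from a metarule $M_0$ as $M_0\theta$, where $\theta$ is a substitution grounding all the existentially quantified variables of $M_0$ (here, mapping each existentially quantified higher-order variable to one of the $p$ available predicate symbols). A program with $n$ clauses is a selection of $n$ such clauses. *)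

From HB Require Import structures.
From mathcomp Require Import all_boot.
Set Implicit Arguments. Unset Strict Implicit. Unset Printing Implicit Defensive.

(* HV x : higher-order variable named x (can be bound to a predicate symbol)
   FV x : first-order variable named x
   PS q : predicate symbol q *)
Inductive term (P : Type) := HV of nat | FV of nat | PS of P.
Arguments HV {P}. Arguments FV {P}. Arguments PS {P}.

Section TermEq.
Variable P : eqType.
Definition term_code (t : term P) : (nat + nat) + P :=
  match t with HV x => inl (inl x) | FV x => inl (inr x) | PS q => inr q end.
Definition term_decode (c : (nat + nat) + P) : term P :=
  match c with inl (inl x) => HV x | inl (inr x) => FV x | inr q => PS q end.
Lemma term_codeK : cancel term_code term_decode. Proof. by case. Qed.
HB.instance Definition _ := Equality.copy (term P) (can_type term_codeK).
End TermEq.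

(* A literal: the term in predicate position, followed by its argument list. *)
Definition lit (P : Type) := (term P * seq (term P))%type.
Definition arity (P : Type) (l : lit P) : nat := size l.2.

(* A metarule  exists pi forall mu, head <- body.  [mex] lists the names of the
   existentially quantified higher-order variables (pi); every other variable
   is universally quantified (mu). *)
Record metarule (p : nat) := Metarule {
  mhead : lit 'I_p;
  mbody : seq (lit 'I_p);
  mex : seq nat }.

Section MREq.
Variable p : nat.
Definition mr_code (M0 : metarule p) := (mhead M0, mbody M0, mex M0).
Definition mr_decode (c : lit 'I_p * seq (lit 'I_p) * seq nat) :=
  Metarule c.1.1 c.1.2 c.2.
Lemma mr_codeK : cancel mr_code mr_decode. Proof. by case. Qed.
HB.instance Definition _ := Equality.copy (metarule p) (can_type mr_codeK).
End MREq.

Definition clause (p : nat) := (lit 'I_p * seq (lit 'I_p))%type.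

Definition in_fragment (i j : nat) (p : nat) (M0 : metarule p) : Prop :=
  size (mbody M0) <= j /\ forall l, l \in mhead M0 :: mbody M0 -> arity l <= i.

Definition pred_positions (p : nat) (M0 : metarule p) : seq (term 'I_p) :=
  map fst (mhead M0 :: mbody M0).
Definition additional_ex_vars (p : nat) (M0 : metarule p) : seq nat :=
  [seq x <- undup (mex M0) | HV x \notin pred_positions M0].

Definition subst_term (p : nat) (ex : seq nat) (theta : nat -> 'I_p)
  (t : term 'I_p) : term 'I_p :=
  match t with HV x => if x \in ex then PS (theta x) else t | _ => t end.
Definition subst_lit (p : nat) (ex : seq nat) (theta : nat -> 'I_p)
  (l : lit 'I_p) : lit 'I_p :=
  (subst_term ex theta l.1, map (subst_term ex theta) l.2).
Definition instantiate (p : nat) (M0 : metarule p) (theta : nat -> 'I_p) : clause p :=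
  (subst_lit (mex M0) theta (mhead M0), map (subst_lit (mex M0) theta) (mbody M0)).

Definition is_clause_of (p : nat) (M : seq (metarule p)) (c : clause p) : Prop :=
  exists2 M0, M0 \in M & exists theta : nat -> 'I_p, c = instantiate M0 theta.

Definition is_program_of (p : nat) (M : seq (metarule p)) (n : nat)
  (P : seq (clause p)) : Prop :=
  size P = n /\ forall c, c \in P -> is_clause_of M c.

From HB Require Import structures.
From mathcomp Require Import all_boot.
Set Implicit Arguments. Unset Strict Implicit. Unset Printing Implicit Defensive.

(* A clause of a metarule is determined by the values of theta on the
   existential variables of the metarule, of which there are at most (j + 1) + k: one
   per literal in predicate position plus the additional ones.  Hence M0 has
   at most p ^ (j + 1 + k) clauses, M has at most m * p ^ (j + 1 + k), and a
   program is a length-n sequence of them. *)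

Fixpoint seqs_of_size (T : Type) (D : seq T) (n : nat) : seq (seq T) :=
  if n is n'.+1 then [seq x :: s | x <- D, s <- seqs_of_size D n'] else [:: [::]].

Lemma size_seqs_of_size (T : Type) (D : seq T) n :
  size (seqs_of_size D n) = size D ^ n.
Proof. by elim: n => //= n IHn; rewrite size_allpairs IHn expnS. Qed.

Lemma mem_seqs_of_size (T : eqType) (D : seq T) (s : seq T) :
  {subset s <= D} -> s \in seqs_of_size D (size s).
Proof.
elim: s => [|x s IHs] //= sD; apply: allpairs_f; first exact/sD/mem_head.
by apply: IHs => y ys; apply/sD; rewrite inE ys orbT.
Qed.

Lemma uniq_seqs_leq_size (T : eqType) (D : seq T) n (ss : seq (seq T)) :
  uniq ss -> (forall s, s \in ss -> size s = n /\ {subset s <= D}) ->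
  size ss <= size D ^ n.
Proof.
move=> ss_uniq ssD; rewrite -size_seqs_of_size; apply: uniq_leq_size => // s.
by case/ssD => <- /mem_seqs_of_size.
Qed.

Section Instantiation.

Variable p : nat.
Implicit Type theta : nat -> 'I_p.

Lemma instantiate_eq_in (M0 : metarule p) theta theta' :
  {in mex M0, theta =1 theta'} -> instantiate M0 theta = instantiate M0 theta'.
Proof.
move=> eq_theta.
have eq_term : subst_term (mex M0) theta =1 subst_term (mex M0) theta'.
  by case=> //= x; case: ifP => // /eq_theta ->.
have eq_lit : subst_lit (mex M0) theta =1 subst_lit (mex M0) theta'.
  by case=> l ls; rewrite /subst_lit /= eq_term (eq_map eq_term).
by rewrite /instantiate eq_lit (eq_map eq_lit).
Qed.

Lemma size_undup_mex_leq (M0 : metarule p) :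
  size (undup (mex M0)) <= size (mbody M0) + 1 + size (additional_ex_vars M0).
Proof.
set vs := undup (mex M0); set in_pred := fun x => HV x \in pred_positions M0.
rewrite -(count_predC in_pred vs) /additional_ex_vars size_filter leq_add2r.
rewrite -size_filter addn1 -[_.+1]/(size (mhead M0 :: mbody M0)).
rewrite -(size_map fst) -(size_map (@HV 'I_p)).
apply: uniq_leq_size; first by rewrite map_inj_uniq ?filter_uniq ?undup_uniq // => x y [].
by move=> y /mapP[x]; rewrite mem_filter => /andP[? _] ->.
Qed.

Lemma instantiations_cover (M0 : metarule p) B :
  size (undup (mex M0)) <= B ->
  exists2 D : seq (clause p), size D <= p ^ B &
    forall theta, instantiate M0 theta \in D.
Proof.
move=> vsB; have [p0 | p_gt0] := posnP p.
  (* With no predicate symbols there is no substitution theta at all. *)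
  by exists [::] => // theta; move: (leq_trans (ltn_ord (theta 0)) (eq_leq p0)).
set vs := undup (mex M0); pose theta_of t x := nth (Ordinal p_gt0) t (index x vs).
exists [seq instantiate M0 (theta_of t) | t <- seqs_of_size (enum 'I_p) (size vs)].
  by rewrite size_map size_seqs_of_size size_enum_ord leq_pexp2l.
move=> theta; rewrite (@instantiate_eq_in _ _ (theta_of (map theta vs))).
  apply: map_f; rewrite -[size vs](size_map theta).
  by apply: mem_seqs_of_size => t _; rewrite mem_enum.
move=> x; rewrite -mem_undup => x_vs.
by rewrite /theta_of (nth_map 0) ?index_mem // nth_index.
Qed.

Lemma clauses_cover (M : seq (metarule p)) B :
  (forall M0, M0 \in M -> size (undup (mex M0)) <= B) ->
  exists2 D : seq (clause p), size D <= size M * p ^ B &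
    forall c, is_clause_of M c -> c \in D.
Proof.
elim: M => [|M0 M IHM] MB; first by exists [::] => // c [].
have [D0 D0B D0M0] := instantiations_cover (MB M0 (mem_head _ _)).
have [|D DB DM] := IHM; first by move=> M1 M1M; apply/MB; rewrite inE M1M orbT.
exists (D0 ++ D); first by rewrite size_cat mulSn leq_add.
move=> c [M1]; rewrite inE mem_cat => /predU1P[-> [theta ->] | M1M cM1].
  by rewrite D0M0.
by rewrite DM ?orbT //; exists M1.
Qed.

End Instantiation.

Theorem proposition2 (p m i j k n : nat) (M : seq (metarule p)) :
  size M = m ->
  (forall M0, M0 \in M ->
     in_fragment i j M0 /\ size (additional_ex_vars M0) <= k) ->
  forall progs : seq (seq (clause p)),
    uniq progs ->
    (forall P, P \in progs -> is_program_of M n P) ->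
    size progs <= (m * p ^ (j + 1 + k)) ^ n.
Proof.
move=> <- M_frag progs progs_uniq progsM.
have [|D DB DM] := @clauses_cover p M (j + 1 + k).
  move=> M0 /M_frag[[bodyj _] addk]; apply: leq_trans (size_undup_mex_leq M0) _.
  by rewrite leq_add ?leq_add2r.
apply: leq_trans (_ : size D ^ n <= _).
  by apply: uniq_seqs_leq_size => // P /progsM[sizeP PM]; split=> // c /PM /DM.
by case: n {progsM} => [|n] //; rewrite leq_exp2r.
Qed.
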